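(* Let $Y\subseteq\mathbb P(V)$, the flag $Y_\bullet$, and two sequences of parameters $\mathbf u=(u_r,\dots,u_1)$, $\mathbf v=(v_r,\dots,v_1)$ associated to $Y_\bullet$ be as in the context. Then for every $f\in\mathbb K(Y)\setminus\{0\}$, $$\nu^{\mathbf u}_{Y_\bullet}(f)\cdot R^{\mathbf v}_{\mathbf u}=\nu^{\mathbf v}_{Y_\bullet}(f).$$
   Context: $\mathbb K$ is an algebraically closed field of characteristic $0$, $V$ a finite-dimensional $\mathbb K$-vector space, $Y\subseteq\mathbb P(V)$ a projective variety of dimension $r$, and $Y_\bullet:Y=Y_r\supseteq Y_{r-1}\supseteq\cdots\supseteq Y_1\supseteq Y_0=\{p\}$ a flag of projective subvarieties with $\dim Y_k=k$ such that each $Y_k$ ($k\ge1$) is smooth in codimension one, so that the local ring $\mathcal O_{Y_{k-1},Y_k}$ of $Y_k$ along $Y_{k-1}$ is a DVR. A sequence of parameters $\mathbf u=(u_r,\dots,u_1)$ consists of rational functions on $Y$ such that $u_k|_{Y_k}$ is a uniformizer of $\mathcal O_{Y_{k-1},Y_k}$. The valuation $\nu^{\mathbf u}_{Y_\bullet}:\mathbb K(Y)\setminus\{0\}\to\mathbb Z^r$ (values written as row vectors $(a_r,\dots,a_1)$, $\mathbb Z^r$ ordered lexicographically) is defined by: $f_r:=f$, $a_r$ = vanishing order of $f_r$ along $Y_{r-1}$; $f_{r-1}:=(u_r^{-a_r}f_r)|_{Y_{r-1}}$, $a_{r-1}$ = vanishing order of $f_{r-1}$ along $Y_{r-2}$;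 and inductively $f_{k-1}:=(u_k^{-a_k}f_k)|_{Y_{k-1}}$, $a_{k-1}$ = vanishing order of $f_{k-1}$ along $Y_{k-2}$. For $0\le k\le r-1$, $Y^k_\bullet:Y_k\supseteq\cdots\supseteq Y_0$ with parameters $(v_k,\dots,v_1)$ gives analogously a valuation $\nu^{\mathbf v}_{Y^k_\bullet}:\mathbb K(Y_k)\setminus\{0\}\to\mathbb Z^k$, embedded in $\mathbb Z^r$ via $(a_k,\dots,a_1)\mapsto(0,\dots,0,a_k,\dots,a_1)$. For $k=1,\dots,r$ let $\lambda_k\in\mathcal O_{Y_{k-1},Y_k}^\times$ be such that $u_k|_{Y_k}=\lambda_k\cdot v_k|_{Y_k}$ (viewing $\lambda_k\in\mathbb K(Y_k)$, its valuation being taken with respect to $Y^{k-1}_\bullet$ after restriction; in the paper written $\nu^{\mathbf v}_{Y^k_\bullet}(\lambda_k)$, whose first $r-k+1$ entries are zero). Let $M^{\mathbf v}_{\mathbf u}\in\mathrm{Mat}_r(\mathbb Z)$ be the matrix whose $k$-th row (rows indexed compatibly with the coordinates $r,\dots,1$) is $\nu^{\mathbf v}_{Y^k_\bullet}(\lambda_k)$, and $R^{\mathbf v}_{\mathbf u}:=\mathrm I_r+M^{\mathbf v}_{\mathbf u}$, an upper triangular unimodular matrix. *)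

From HB Require Import structures.
From mathcomp Require Import all_boot all_order all_algebra.
Set Implicit Arguments. Unset Strict Implicit. Unset Printing Implicit Defensive.
Import Order.TTheory GRing.Theory Num.Theory.
Local Open Scope ring_scope.

(* Algebraic encoding of the flag  Y = Y_r ⊇ ... ⊇ Y_0 = {p}:
   F k        = the function field K(Y_k),
   ord k      : K(Y_{k+1}) -> Z, the vanishing order along Y_k
                 (the normalized valuation of the DVR O_{Y_k, Y_{k+1}}),
   res k      : K(Y_{k+1}) -> K(Y_k), restriction to Y_k
                 (the residue map of O_{Y_k,Y_{k+1}}, meaningful on that DVR;
                  its value outside the valuation ring is irrelevant junk). *)
Unset Implicit Arguments.
Record DVRFlag (r : nat) := {
  F : nat -> fieldType;
  ord : forall k, F k.+1 -> int;
  res : forall k, F k.+1 -> F k;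
  ord_mul : forall k (x y : F k.+1), (k < r)%N -> x != 0 -> y != 0 ->
     ord k (x * y) = ord k x + ord k y;
  ord_add : forall k (x y : F k.+1), (k < r)%N -> x != 0 -> y != 0 -> x + y != 0 ->
     Order.min (ord k x) (ord k y) <= ord k (x + y);
  ord_onto : forall k, (k < r)%N -> exists x : F k.+1, (x != 0) && (ord k x == 1);
  (* res k is the residue map of the valuation ring O = {x | x = 0 or ord k x >= 0} *)
  res_one : forall k, (k < r)%N -> res k 1 = 1;
  res_add : forall k (x y : F k.+1), (k < r)%N ->
     (x == 0) || (0 <= ord k x) -> (y == 0) || (0 <= ord k y) ->
     res k (x + y) = res k x + res k y;
  res_mul : forall k (x y : F k.+1), (k < r)%N ->
     (x == 0) || (0 <= ord k x) -> (y == 0) || (0 <= ord k y) ->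
     res k (x * y) = res k x * res k y;
  res_ker : forall k (x : F k.+1), (k < r)%N -> (x == 0) || (0 <= ord k x) ->
     (res k x == 0) = (x == 0) || (0 < ord k x);
  res_onto : forall k (z : F k), (k < r)%N ->
     exists2 x : F k.+1, (x == 0) || (0 <= ord k x) & res k x = z
}.
Set Implicit Arguments.
Arguments F {r} d.
Arguments ord {r d k}.
Arguments res {r d k}.

(* A sequence of parameters: u k is (the restriction to Y_{k+1} of) the
   paper's u_{k+1}, a uniformizer of O_{Y_k, Y_{k+1}}. *)
Definition is_params r (D : DVRFlag r) (u : forall k, F D k.+1) : Prop :=
  forall k, (k < r)%N -> u k != 0 /\ ord (u k) = 1.

(* nu D u k f = the valuation of f ∈ K(Y_k) w.r.t. Y^k_• and parameters u,
   as the list (a_k, ..., a_1). *)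
Fixpoint nu r (D : DVRFlag r) (u : forall k, F D k.+1) (k : nat) : F D k -> seq int :=
  match k return F D k -> seq int with
  | 0 => fun _ => [::]
  | k'.+1 => fun f =>
      let a := ord f in a :: @nu r D u k' (res (f * (u k') ^ (- a)))
  end.

(* Embedding Z^k -> Z^r, (a_k,...,a_1) |-> (0,...,0,a_k,...,a_1), as a row
   vector indexed by columns 0..r-1 corresponding to coordinates r,...,1. *)
Definition embed_row (r k : nat) (s : seq int) : 'rV[int]_r :=
  \row_(j < r) (if (j < r - k)%N then 0 else nth 0 s (j - (r - k))).

Definition nuY r (D : DVRFlag r) (u : forall k, F D k.+1) (f : F D r) : 'rV[int]_r :=
  embed_row r r (nu u f).

Definition lambda r (D : DVRFlag r) (u v : forall k, F D k.+1) (k : nat) : F D k.+1 :=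
  u k / v k.

(* nu^v_{Y^k_•}(lambda_k), embedded in Z^r (k = paper index, k >= 1). *)
Definition lambda_row r (D : DVRFlag r) (u v : forall k, F D k.+1) (k : nat)
  : 'rV[int]_r :=
  match k with
  | 0 => 0
  | k'.+1 => embed_row r k'.+1 (nu v (lambda u v k'))
  end.

(* M^v_u: row i (coordinate r - i) is nu^v_{Y^{r-i}_•}(lambda_{r-i}). *)
Definition Mmat r (D : DVRFlag r) (u v : forall k, F D k.+1) : 'M[int]_r :=
  \matrix_(i < r, j < r) (lambda_row u v (r - i) 0 j).

Definition Rmat r (D : DVRFlag r) (u v : forall k, F D k.+1) : 'M[int]_r :=
  1%:M + Mmat u v.

From mathcomp Require Import all_boot all_order all_algebra.
From mathcomp Require Import zify.
Import Order.TTheory GRing.Theory Num.Theory.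
Set Implicit Arguments. Unset Strict Implicit. Unset Printing Implicit Defensive.
Local Open Scope ring_scope.

(* Write f = f_u * u^a with a = ord f, so that f_u is a unit of the DVR.
   Changing parameters gives f_v = f_u * lambda^a, and since the valuation
   vector nu is additive on units, the entries of nu^v(f) below the top one are
   those of nu^v(res f_u) plus a times those of nu^v(lambda).  Induction on the
   length of the flag turns this recursion into the matrix identity. *)

Section Valuation.
Variables (r : nat) (D : DVRFlag r).

Lemma ord1 k : (k < r)%N -> ord (1 : F D k.+1) = 0.
Proof.
move=> kr; have := @ord_mul _ D k 1 1 kr (oner_neq0 _) (oner_neq0 _).
by rewrite mulr1 => h; lia.
Qed.

Lemma ordV k (x : F D k.+1) : (k < r)%N -> x != 0 -> ord x^-1 = - ord x.
Proof.
move=> kr x0; have := @ord_mul _ D k _ _ kr x0 (invr_neq0 x0).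
by rewrite mulfV // ord1 // => h; lia.
Qed.

Lemma ordXn k (x : F D k.+1) (n : nat) :
  (k < r)%N -> x != 0 -> ord (x ^+ n) = n%:Z * ord x.
Proof.
move=> kr x0; elim: n => [|n IHn]; first by rewrite expr0 ord1 // mul0r.
by rewrite exprS ord_mul ?expf_neq0 // IHn intS mulrDl mul1r.
Qed.

Lemma ordXz k (x : F D k.+1) (n : int) :
  (k < r)%N -> x != 0 -> ord (x ^ n) = n * ord x.
Proof.
move=> kr x0; case: n => n; first by rewrite -exprnP ordXn.
by rewrite NegzE -invr_expz ordV ?expfz_neq0 // -exprnP ordXn // mulNr.
Qed.

Lemma resM_ord0 k (x y : F D k.+1) :
  (k < r)%N -> ord x = 0 -> ord y = 0 -> res (x * y) = res x * res y.
Proof. by move=> kr ox oy; apply: res_mul; rewrite // ?ox ?oy lexx orbT. Qed.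

Lemma res_neq0 k (x : F D k.+1) : (k < r)%N -> x != 0 -> ord x = 0 -> res x != 0.
Proof.
move=> kr x0 ox; rewrite res_ker //; last by rewrite ox lexx orbT.
by rewrite (negbTE x0) ox ltxx.
Qed.

Lemma nuYE (w : forall k, F D k.+1) (f : F D r) (j : 'I_r) :
  nuY w f 0 j = nth 0 (nu w f) j.
Proof. by rewrite mxE subnn subn0. Qed.

Section ParameterSequence.
Variables (w : forall k, F D k.+1) (hw : is_params w).

Definition unit_part k (x : F D k.+1) : F D k.+1 := x * w k ^ (- ord x).

Lemma nuS k (x : F D k.+1) : nu w x = ord x :: nu w (res (unit_part x)).
Proof. by []. Qed.

Lemma nth_nu0 k (x : F D k.+1) : nth 0 (nu w x) 0 = ord x.
Proof. by []. Qed.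

Lemma nth_nuS k (x : F D k.+1) j :
  nth 0 (nu w x) j.+1 = nth 0 (nu w (res (unit_part x))) j.
Proof. by []. Qed.

Lemma unit_part_neq0 k (x : F D k.+1) : (k < r)%N -> x != 0 -> unit_part x != 0.
Proof. by move=> kr x0; rewrite mulf_neq0 ?expfz_neq0 //; case: (hw kr). Qed.

Lemma ord_unit_part k (x : F D k.+1) : (k < r)%N -> x != 0 -> ord (unit_part x) = 0.
Proof.
move=> kr x0; have [w0 w1] := hw kr.
by rewrite ord_mul ?expfz_neq0 // ordXz // w1 mulr1 subrr.
Qed.

Lemma unit_partM k (x y : F D k.+1) : (k < r)%N -> x != 0 -> y != 0 ->
  unit_part (x * y) = unit_part x * unit_part y.
Proof.
move=> kr x0 y0; have [w0 _] := hw kr.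
by rewrite /unit_part ord_mul // opprD expfzDr // mulrACA.
Qed.

Lemma nu_ord0 k (x : F D k.+1) : ord x = 0 -> nu w x = 0 :: nu w (res x).
Proof. by move=> ox; rewrite nuS /unit_part ox oppr0 expr0z mulr1. Qed.

Lemma nu_unit_part k (x : F D k.+1) :
  (k < r)%N -> x != 0 -> nu w (unit_part x) = 0 :: behead (nu w x).
Proof. by move=> kr x0; rewrite nu_ord0 ?ord_unit_part. Qed.

Lemma nth_nuM k (x y : F D k) j : (k <= r)%N -> x != 0 -> y != 0 ->
  nth 0 (nu w (x * y)) j = nth 0 (nu w x) j + nth 0 (nu w y) j.
Proof.
elim: k x y j => [|k IHk] x y j kr x0 y0; first by rewrite !nth_nil addr0.
case: j => [|j]; first by rewrite !nth_nu0 ord_mul.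
have ux := unit_part_neq0 kr x0; have uy := unit_part_neq0 kr y0.
have ox := ord_unit_part kr x0; have oy := ord_unit_part kr y0.
rewrite !nth_nuS unit_partM // resM_ord0 //.
by rewrite IHk ?(ltnW kr) ?(res_neq0 kr ux ox) ?(res_neq0 kr uy oy).
Qed.

Lemma nth_nu1 k j : (k <= r)%N -> nth 0 (nu w (1 : F D k)) j = 0.
Proof.
move=> kr; have := nth_nuM j kr (oner_neq0 (F D k)) (oner_neq0 _).
by rewrite mulr1 => /esym/eqP; rewrite -subr_eq0 addrK => /eqP.
Qed.

Lemma nth_nuV k (x : F D k) j : (k <= r)%N -> x != 0 ->
  nth 0 (nu w x^-1) j = - nth 0 (nu w x) j.
Proof.
move=> kr x0; have := nth_nuM j kr x0 (invr_neq0 x0).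
by rewrite mulfV // nth_nu1 // => /esym/eqP; rewrite addrC addr_eq0 => /eqP.
Qed.

Lemma nth_nuXn k (x : F D k) (n : nat) j : (k <= r)%N -> x != 0 ->
  nth 0 (nu w (x ^+ n)) j = n%:Z * nth 0 (nu w x) j.
Proof.
move=> kr x0; elim: n => [|n IHn]; first by rewrite expr0 nth_nu1 // mul0r.
by rewrite exprS nth_nuM ?expf_neq0 // IHn intS mulrDl mul1r.
Qed.

Lemma nth_nuXz k (x : F D k) (n : int) j : (k <= r)%N -> x != 0 ->
  nth 0 (nu w (x ^ n)) j = n * nth 0 (nu w x) j.
Proof.
move=> kr x0; case: n => n; first by rewrite -exprnP nth_nuXn.
by rewrite NegzE -invr_expz nth_nuV ?expfz_neq0 // -exprnP nth_nuXn // mulNr.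
Qed.

End ParameterSequence.

Section ChangeOfParameters.
Variables (u v : forall k, F D k.+1) (hu : is_params u) (hv : is_params v).

Lemma lambda_neq0 k : (k < r)%N -> lambda u v k != 0.
Proof.
by move=> kr; have [u0 _] := hu kr; have [v0 _] := hv kr; rewrite mulf_neq0 ?invr_neq0.
Qed.

Lemma ord_lambda k : (k < r)%N -> ord (lambda u v k) = 0.
Proof.
move=> kr; have [u0 u1] := hu kr; have [v0 v1] := hv kr.
by rewrite ord_mul ?invr_neq0 // ordV // u1 v1 subrr.
Qed.

Lemma unit_part_change k (x : F D k.+1) : (k < r)%N ->
  unit_part v x = unit_part u x * lambda u v k ^ ord x.
Proof.
move=> kr; have [u0 _] := hu kr.
rewrite /unit_part /lambda expfzMl exprz_inv mulrA -[x * _ * _]mulrA.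
by rewrite -expfzDr // addNr expr0z mulr1.
Qed.

Lemma nth_nuS_change k (x : F D k.+1) j : (k < r)%N -> x != 0 ->
  nth 0 (nu v x) j.+1 =
  nth 0 (nu v (res (unit_part u x))) j + ord x * nth 0 (nu v (lambda u v k)) j.+1.
Proof.
move=> kr x0.
have -> : nth 0 (nu v x) j.+1 = nth 0 (nu v (unit_part v x)) j.+1.
  by rewrite (nu_unit_part hv kr x0) nuS.
have ux := unit_part_neq0 hu kr x0; have lam0 := lambda_neq0 kr.
rewrite unit_part_change // nth_nuM ?expfz_neq0 // nth_nuXz //.
by rewrite (nu_ord0 _ (ord_unit_part hu kr x0)).
Qed.

(* The entry (i, j) of M^v_u for the truncated flag Y^k_•, with rows and
   columns counted from the top coordinate a_k. *)
Definition Mcoef k (i j : nat) : int :=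
  if (i <= j)%N then nth 0 (nu v (lambda u v (k.-1 - i))) (j - i) else 0.

Lemma McoefSS k i j : Mcoef k.+1 i.+1 j.+1 = Mcoef k i j.
Proof. by rewrite /Mcoef ltnS subSS /= subnS predn_sub. Qed.

Lemma Mcoef_top k j : Mcoef k.+1 0 j = nth 0 (nu v (lambda u v k)) j.
Proof. by rewrite /Mcoef leq0n !subn0. Qed.

Lemma MmatE (i j : 'I_r) : Mmat u v i j = Mcoef r i j.
Proof.
have ri : (r - i = (r.-1 - i).+1)%N by have := ltn_ord i; lia.
rewrite mxE ri /= mxE.
have -> : (r - (r.-1 - i).+1 = i)%N by lia.
by rewrite /Mcoef ltnNge; case: leqP.
Qed.

Lemma nth_nu_change k (g : F D k) j : (k <= r)%N -> g != 0 ->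
  nth 0 (nu v g) j = nth 0 (nu u g) j + \sum_(i < k) nth 0 (nu u g) i * Mcoef k i j.
Proof.
elim: k g j => [|k IHk] g j kr g0; first by rewrite big_ord0 !nth_nil addr0.
rewrite big_ord_recl Mcoef_top nth_nu0; case: j => [|j].
  rewrite big1 => [|i _]; last by rewrite /Mcoef lift0 mulr0.
  by rewrite (nu_ord0 _ (ord_lambda kr)) mulr0 !addr0.
under eq_bigr => i _ do rewrite lift0 McoefSS nth_nuS.
have ug := unit_part_neq0 hu kr g0.
have ug0 := res_neq0 kr ug (ord_unit_part hu kr g0).
by rewrite nth_nuS_change // nth_nuS IHk ?(ltnW kr) // addrAC addrA.
Qed.

End ChangeOfParameters.
End Valuation.

Theorem proposition3p2 (r : nat) (D : DVRFlag r)
  (u v : forall k, F D k.+1) :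
  is_params u -> is_params v ->
  forall f : F D r, f != 0 -> nuY u f *m Rmat u v = nuY v f.
Proof.
move=> hu hv f f0; apply/rowP => j.
rewrite /Rmat mulmxDr mulmx1 mxE [(_ *m _) _ _]mxE !nuYE.
rewrite (nth_nu_change hu hv j (leqnn r) f0); congr (_ + _).
apply: eq_bigr => i _.
by rewrite nuYE MmatE.
Qed.
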